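(* For every integer $n\geq 4$, let $S_n$ be the star with $n$ vertices (one center adjacent to $n-1$ leaves). Then $\chi_L(S_n\odot\overline{K_1})=\lceil\sqrt{n}\rceil+1$.
   Context: All graphs are finite and simple. A $k$-coloring of a connected graph $G$ is a map $c:V(G)\to\{1,\dots,k\}$ with $c(u)\neq c(v)$ for adjacent $u,v$; it induces the partition $\Pi=\{C_1,\dots,C_k\}$ into color classes $C_i=c^{-1}(i)$. The color code of $v$ is $c_\Pi(v)=(d(v,C_1),\dots,d(v,C_k))$ with $d(v,C_i)=\min\{d(v,x): x\in C_i\}$ (graph distance). $c$ is a locating coloring if distinct vertices have distinct color codes; the locating-chromatic number $\chi_L(G)$ is the least $k$ for which a locating $k$-coloring exists. The corona product $G\odot H$ of a graph $G$ with vertex set $\{a_1,\dots,a_n\}$ and a graph $H$ is obtained from one copy of $G$ and $n$ disjoint copies of $H$ by joining $a_i$ to every vertex of the $i$-th copy of $H$. Thus $S_n\odot\overline{K_1}$ is the tree obtained from $S_n$ by attaching one new pendant vertex to each of its $n$ vertices. *)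

From mathcomp Require Import all_boot.
Set Implicit Arguments. Unset Strict Implicit. Unset Printing Implicit Defensive.

Definition simple_graph (T : finType) (e : rel T) : Prop :=
  irreflexive e /\ symmetric e.

Fixpoint reach (T : finType) (e : rel T) (k : nat) (x : T) : {set T} :=
  match k with
  | 0 => [set x]
  | k'.+1 => reach e k' x :|: [set y | [exists z in reach e k' x, e z y]]
  end.

(* Graph distance: the least k such that y is within k steps of x
   (for a connected graph this is < #|T|, so the search over 0..#|T|-1
   finds it). *)
Definition gdist (T : finType) (e : rel T) (x y : T) : nat :=
  find (fun k => y \in reach e k x) (iota 0 #|T|).

(* d(v, C) = min_{x in C} d(v, x); (the default #|T| only matters for an
   empty class, where it is a constant independent of v). *)
Definition dist_set (T : finType) (e : rel T) (v : T) (C : {set T}) : nat :=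
  \big[minn/#|T|]_(x in C) gdist e v x.

Definition color_class (T : finType) (k : nat) (c : T -> 'I_k) (i : 'I_k)
  : {set T} := [set x | c x == i].

Definition color_code (T : finType) (e : rel T) (k : nat) (c : T -> 'I_k)
  (v : T) : 'I_k -> nat := fun i => dist_set e v (color_class c i).

Definition proper_coloring (T : finType) (e : rel T) (k : nat)
  (c : T -> 'I_k) : Prop := forall u v, e u v -> c u != c v.

Definition locating_coloring (T : finType) (e : rel T) (k : nat)
  (c : T -> 'I_k) : Prop :=
  proper_coloring e c /\
  (forall u v, (forall i, color_code e c u i = color_code e c v i) -> u = v).

Definition is_locating_chromatic_number (T : finType) (e : rel T) (m : nat)
  : Prop :=
  (exists c : T -> 'I_m, locating_coloring e c) /\
  (forall k (c : T -> 'I_k), locating_coloring e c -> m <= k).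

Definition star_rel (n : nat) : rel 'I_n :=
  fun i j => (i != j) && ((val i == 0) || (val j == 0)).

(* Corona G (.) H: vertex (a, None) is vertex a of G, (a, Some w) is
   vertex w of the copy of H attached to a. *)
Definition corona (V W : finType) (eG : rel V) (eH : rel W)
  : rel (V * option W) :=
  fun x y =>
    match x, y with
    | (a, None), (b, None) => eG a b
    | (a, Some w), (b, Some w') => (a == b) && eH w w'
    | (a, None), (b, Some _) => a == b
    | (a, Some _), (b, None) => a == b
    end.

Definition K1bar : rel unit := fun _ _ => false.

Definition star_corona_K1 (n : nat) : rel ('I_n * option unit) :=
  corona (@star_rel n) K1bar.

From mathcomp Require Import all_boot zify.
Set Implicit Arguments. Unset Strict Implicit. Unset Printing Implicit Defensive.

(* Give each leaf a of the star the pair (colour of a, colour of its pendant).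
   In a locating colouring these pairs are pairwise distinct, their first entry
   avoids the colour of the centre, their entries differ, and none equals
   (colour of the centre's pendant, colour of the centre): otherwise two vertices
   have equal colour codes, as witnessed by colour-preserving maps that do not
   increase distances.  Conversely, every such assignment is locating, since the
   colours at distance 0 and at distance at most 1 already separate the vertices.
   With k colours there are (k-1)^2 - 1 admissible pairs for the n - 1 leaves, so
   a locating k-colouring exists iff n <= (k-1)^2. *)

Lemma bigmin_leq (I : finType) (P : pred I) (F : I -> nat) (N m : nat) :
  (\big[minn/N]_(i | P i) F i <= m) = (N <= m) || [exists (i | P i), F i <= m].
Proof.
have -> : [exists (i | P i), F i <= m] =
          has (fun i => F i <= m) [seq i <- index_enum I | P i].
  apply/existsP/hasP => [[i /andP [Pi Fi]] | [i]].
    by exists i; rewrite // mem_filter Pi mem_index_enum.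
  by rewrite mem_filter => /andP [Pi _] Fi; exists i; rewrite Pi.
rewrite -big_filter; elim: [seq _ <- _ | _] => [|i s IH].
  by rewrite big_nil orbF.
by rewrite big_cons geq_min IH /= orbCA.
Qed.

Lemma find_iota_leq (m N : nat) : m < N -> find (leq m) (iota 0 N) = m.
Proof.
have gen i : i <= m < i + N -> find (leq m) (iota i N) = m - i.
  elim: N i => [|N IH] i /=; first lia.
  by case: ifP => mi H; [lia | rewrite IH; lia].
by move=> mN; rewrite gen ?subn0.
Qed.

Section Graph.

Variables (T : finType) (e : rel T).

Section BreadthFirst.

Variables (x : T) (d : T -> nat).
Hypothesis d_eq0 : forall y, (d y == 0) = (y == x).
Hypothesis d_edge : forall z y, e z y -> d y <= (d z).+1.
Hypothesis d_pred : forall y, y != x -> exists2 z, e z y & d z < d y.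

Lemma reach_dist k : reach e k x = [set y | d y <= k].
Proof.
elim: k => [|k IH]; apply/setP => y.
  by rewrite !inE leqn0 d_eq0.
rewrite [reach e k.+1 x]/= IH !inE.
apply/idP/idP => [/orP [yk | /existsP [z]] | yk].
- exact: leqW.
- by rewrite inE => /andP [zk /d_edge dy]; apply: leq_trans dy _.
have [//|kd] := leqP (d y) k; apply/orP; right.
have [|z zy dz] := @d_pred y; first by rewrite -d_eq0 -lt0n (leq_ltn_trans _ kd).
by apply/existsP; exists z; rewrite inE zy andbT -ltnS (leq_trans dz).
Qed.

Lemma gdist_dist y : d y < #|T| -> gdist e x y = d y.
Proof.
move=> dyT; rewrite /gdist (eq_find (a2 := leq (d y))) ?find_iota_leq // => k.
by rewrite reach_dist inE.
Qed.

End BreadthFirst.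

Lemma dist_set_le (u v : T) (C : {set T}) :
    (forall y, y \in C -> exists2 y', y' \in C & gdist e v y' <= gdist e u y) ->
  dist_set e v C <= dist_set e u C.
Proof.
move=> H; have := leqnn (dist_set e u C).
rewrite {1}/dist_set bigmin_leq /dist_set bigmin_leq => /orP [-> // | ].
case/existsP => y /andP [yC yd]; have [y' y'C y'd] := H y yC.
by apply/orP; right; apply/existsP; exists y'; rewrite y'C (leq_trans y'd).
Qed.

Lemma color_code_eq_of_maps k (c : T -> 'I_k) (u v : T) (phi psi : T -> T) :
    (forall y, c (phi y) = c y) -> (forall y, gdist e v (phi y) <= gdist e u y) ->
    (forall y, c (psi y) = c y) -> (forall y, gdist e u (psi y) <= gdist e v y) ->
  forall i, color_code e c u i = color_code e c v i.
Proof.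
move=> c_phi d_phi c_psi d_psi i; apply/eqP; rewrite eqn_leq.
apply/andP; split; apply: dist_set_le => y; rewrite inE => /eqP cy.
  by exists (psi y); rewrite ?inE ?c_psi ?cy.
by exists (phi y); rewrite ?inE ?c_phi ?cy.
Qed.

End Graph.

(* [x] and [y] stand for the colours of the centre and of its pendant. *)
Definition admissible_pairs k (x y : 'I_k) : {set 'I_k * 'I_k} :=
  [set p | [&& p.1 != x, p.2 != p.1 & p != (y, x)]].

Lemma card_admissible_pairs k (x y : 'I_k) : y != x ->
  #|admissible_pairs x y| = k.-1 ^ 2 - 1.
Proof.
move=> yx; set A := [set p : 'I_k * 'I_k | (p.1 != x) && (p.2 != p.1)].
have cardA : #|A| = k.-1 ^ 2.
  rewrite -mulnn -sum1_card (eq_bigl (fun p => (p.1 != x) && (p.2 != p.1))) => [|p];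
    last by rewrite inE.
  rewrite -(pair_big_dep (fun a => a != x) (fun a b => b != a) (fun _ _ => 1)) /=.
  rewrite (eq_bigr (fun _ => k.-1)) => [|a _]; first by rewrite sum_nat_const cardC1 card_ord.
  by rewrite sum1_card cardC1 card_ord.
have -> : admissible_pairs x y = A :\ (y, x).
  by apply/setP => p; rewrite !inE andbA andbC.
by have := cardsD1 (y, x) A; rewrite cardA inE /= yx eq_sym yx /= => ->; rewrite addKn.
Qed.

Section StarCorona.

Variable n : nat.
Hypothesis n_gt2 : 2 < n.

Local Notation V := ('I_n * option unit)%type.
Local Notation e := (@star_corona_K1 n).

Definition center : 'I_n := Ordinal (leq_trans (isT : 0 < 3) n_gt2).

Lemma eq_center (a : 'I_n) : (a == center) = (val a == 0).
Proof. by rewrite -val_eqE. Qed.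

Lemma star_corona_edge (u v : V) :
  e u v = if u.1 == v.1 then u.2 != v.2
          else [&& u.2 == None, v.2 == None & (u.1 == center) || (v.1 == center)].
Proof.
case: u v => [a [[]|]] [b [[]|]]; rewrite /star_corona_K1 /corona /star_rel /K1bar /=.
- by case: (a == b).
- by case: eqP.
- by case: eqP.
- by rewrite !eq_center; case: eqP.
Qed.

Definition depth (u : V) : nat := (u.1 != center) + (u.2 != None).

(* Vertices in different branches are joined through the centre. *)
Definition corona_dist (u v : V) : nat :=
  if u.1 == v.1 then nat_of_bool (u.2 != v.2) else depth u + depth v.

Variant vertex_spec : V -> Type :=
  | CenterVertex : vertex_spec (center, None)
  | CenterPendant : vertex_spec (center, Some tt)
  | LeafVertex a of a != center : vertex_spec (a, None)
  | LeafPendant a of a != center : vertex_spec (a, Some tt).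

Lemma vertexP (u : V) : vertex_spec u.
Proof. by case: u => a [[]|]; case: (eqVneq a center) => [->|]; constructor. Qed.

Local Ltac vertex_arith :=
  rewrite ?star_corona_edge /corona_dist /depth /= ?xpair_eqE ?(@eqE (option unit));
  rewrite /= ?eqxx ?eq_center -?val_eqE /=; repeat case: ifP; lia.

Lemma corona_dist_eq0 (u v : V) : (corona_dist u v == 0) = (v == u).
Proof. by case: u v => [a [[]|]] [b [[]|]]; vertex_arith. Qed.

Lemma corona_dist_edge (u z v : V) : e z v -> corona_dist u v <= (corona_dist u z).+1.
Proof. by case: u z v => [a [[]|]] [b [[]|]] [c [[]|]]; vertex_arith. Qed.

Lemma corona_dist_le4 (u v : V) : corona_dist u v <= 4.
Proof. by case: u v => [a [[]|]] [b [[]|]]; vertex_arith. Qed.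

Lemma corona_dist_pred (u v : V) :
  v != u -> exists2 z, e z v & corona_dist u z < corona_dist u v.
Proof.
case: u v => [a o] [b p]; have [<- | ab] := eqVneq a b; move=> uv.
  have op : o != p by move: uv; rewrite xpair_eqE eqxx eq_sym.
  by exists (a, o); rewrite ?star_corona_edge /corona_dist !eqxx ?lt0b.
case: p uv => [[]|] _.
  by exists (b, None); move: ab; case: o => [[]|]; vertex_arith.
have [bC | bC] := eqVneq b center.
  by exists (a, None); move: ab; rewrite bC; case: o => [[]|]; vertex_arith.
by exists (center, None); move: ab bC; case: o => [[]|]; vertex_arith.
Qed.

Lemma gdist_star_corona (u v : V) : gdist e u v = corona_dist u v.
Proof.
apply: (gdist_dist (d := corona_dist u)) => [y | z y | y | ].
- exact: corona_dist_eq0.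
- exact: corona_dist_edge.
- exact: corona_dist_pred.
rewrite card_prod card_ord card_option card_unit.
by apply: leq_ltn_trans (corona_dist_le4 u v) _; lia.
Qed.

Definition closed_nbhd (u : V) : {set V} := [set v | corona_dist u v <= 1].

Lemma closed_nbhd_leaf (a : 'I_n) : a != center ->
  closed_nbhd (a, None) = [set (a, None); (a, Some tt); (center, None)].
Proof.
by move=> aC; apply/setP => -[b [[]|]]; rewrite !inE; move: aC; vertex_arith.
Qed.

Lemma closed_nbhd_leaf_pendant (a : 'I_n) : a != center ->
  closed_nbhd (a, Some tt) = [set (a, Some tt); (a, None)].
Proof.
by move=> aC; apply/setP => -[b [[]|]]; rewrite !inE; move: aC; vertex_arith.
Qed.

Lemma closed_nbhd_center_pendant :
  closed_nbhd (center, Some tt) = [set (center, Some tt); (center, None)].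
Proof. by apply/setP => -[b [[]|]]; rewrite !inE; vertex_arith. Qed.

Lemma center_pendant_in_nbhd : (center, Some tt) \in closed_nbhd (center, None).
Proof. by rewrite inE /corona_dist eqxx. Qed.

Definition swap_branches (a b : 'I_n) (v : V) : V :=
  if v.1 == a then (b, v.2) else if v.1 == b then (a, v.2) else v.

Definition swap_leaf_pendant (a : 'I_n) (v : V) : V :=
  if v == (a, None) then (center, Some tt)
  else if v == (center, Some tt) then (a, None) else v.

Definition fold_onto_pendant (a : 'I_n) (v : V) : V :=
  if v == (a, Some tt) then (center, None) else swap_leaf_pendant a v.

Lemma corona_dist_swap_branches (a b : 'I_n) (v : V) : a != center -> b != center ->
  corona_dist (b, None) (swap_branches a b v) = corona_dist (a, None) v.
Proof.
by case: v => d [[]|]; rewrite /swap_branches /=; repeat case: ifP; vertex_arith.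
Qed.

Lemma corona_dist_swap_leaf_pendant (a : 'I_n) (v : V) : a != center ->
  corona_dist (a, None) (swap_leaf_pendant a v) <= corona_dist (center, Some tt) v.
Proof.
by case: v => d [[]|]; rewrite /swap_leaf_pendant; repeat case: ifP; vertex_arith.
Qed.

Lemma corona_dist_fold_onto_pendant (a : 'I_n) (v : V) : a != center ->
  corona_dist (center, Some tt) (fold_onto_pendant a v) <= corona_dist (a, None) v.
Proof.
by case: v => d [[]|]; rewrite /fold_onto_pendant /swap_leaf_pendant;
  repeat case: ifP; vertex_arith.
Qed.

Section Coloring.

Variables (k : nat) (c : V -> 'I_k).

Local Notation cC := (c (center, None)).
Local Notation cP := (c (center, Some tt)).

Definition leaf_pair (a : 'I_n) : 'I_k * 'I_k := (c (a, None), c (a, Some tt)).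

Definition nbhd_colors (u : V) : {set 'I_k} := c @: closed_nbhd u.

Lemma dist_set_star_corona (u : V) (C : {set V}) m :
  (dist_set e u C <= m) = (n.*2 <= m) || [exists v in C, corona_dist u v <= m].
Proof.
rewrite /dist_set bigmin_leq card_prod card_ord card_option card_unit muln2.
by congr (_ || _); apply: eq_existsb => v; rewrite gdist_star_corona.
Qed.

Lemma color_code_eq0 (u : V) i : (color_code e c u i == 0) = (c u == i).
Proof.
have n2 : (n.*2 <= 0) = false by apply/negbTE; rewrite -muln2 -ltnNge; lia.
rewrite -leqn0 /color_code /color_class dist_set_star_corona n2 /=.
apply/existsP/idP => [[v] | cu].
  by rewrite inE leqn0 corona_dist_eq0 => /andP [cv /eqP <-].
by exists u; rewrite inE cu leqn0 corona_dist_eq0 eqxx.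
Qed.

Lemma color_code_leq1 (u : V) i : (color_code e c u i <= 1) = (i \in nbhd_colors u).
Proof.
have n2 : (n.*2 <= 1) = false by apply/negbTE; rewrite -muln2 -ltnNge; lia.
rewrite /color_code /color_class dist_set_star_corona n2 /=.
apply/existsP/imsetP => [[v] | [v vu ->]]; last by exists v; move: vu; rewrite !inE eqxx.
by rewrite !inE => /andP [/eqP <- uv]; exists v; rewrite ?inE.
Qed.

Lemma nbhd_colors_leaf (a : 'I_n) : a != center ->
  nbhd_colors (a, None) = [set c (a, None); c (a, Some tt); cC].
Proof. by move=> aC; rewrite /nbhd_colors closed_nbhd_leaf // imsetU imsetU1 !imset_set1. Qed.

Lemma nbhd_colors_leaf_pendant (a : 'I_n) : a != center ->
  nbhd_colors (a, Some tt) = [set c (a, Some tt); c (a, None)].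
Proof. by move=> aC; rewrite /nbhd_colors closed_nbhd_leaf_pendant // imsetU1 imset_set1. Qed.

Lemma nbhd_colors_center_pendant : nbhd_colors (center, Some tt) = [set cP; cC].
Proof. by rewrite /nbhd_colors closed_nbhd_center_pendant imsetU1 imset_set1. Qed.

Lemma center_pendant_color_in_nbhd : cP \in nbhd_colors (center, None).
Proof. exact/imset_f/center_pendant_in_nbhd. Qed.

Lemma swap_branches_color (a b : 'I_n) : (forall o, c (a, o) = c (b, o)) ->
  forall v, c (swap_branches a b v) = c v.
Proof.
move=> c_ab [d o]; rewrite /swap_branches /=.
by case: eqP => [-> | _]; [|case: eqP => [-> |]]; rewrite ?c_ab.
Qed.

Lemma locating_leaf_pair_inj :
  locating_coloring e c -> {in [set~ center] &, injective leaf_pair}.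
Proof.
move=> [_ loc] a b; rewrite !in_setC1 => aC bC ab.
have c_ab o : c (a, o) = c (b, o) by case: ab; case: o => [[]|].
suff : (a, None) = (b, None) :> V by case.
apply/loc/(color_code_eq_of_maps (phi := swap_branches a b) (psi := swap_branches b a)).
- exact: swap_branches_color.
- by move=> v; rewrite !gdist_star_corona corona_dist_swap_branches.
- by apply: swap_branches_color => o; rewrite c_ab.
- by move=> v; rewrite !gdist_star_corona corona_dist_swap_branches.
Qed.

Lemma swap_leaf_pendant_color (a : 'I_n) : c (a, None) = cP ->
  forall v, c (swap_leaf_pendant a v) = c v.
Proof.
move=> ca v; rewrite /swap_leaf_pendant.
by case: eqP => [-> | _]; [|case: eqP => [-> | _]].
Qed.

Lemma fold_onto_pendant_color (a : 'I_n) : leaf_pair a = (cP, cC) ->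
  forall v, c (fold_onto_pendant a v) = c v.
Proof.
case=> ca cb v; rewrite /fold_onto_pendant.
by case: eqP => [-> | _]; [|apply: swap_leaf_pendant_color].
Qed.

Lemma locating_leaf_pair_admissible : locating_coloring e c ->
  {in [set~ center], forall a, leaf_pair a \in admissible_pairs cC cP}.
Proof.
move=> [proper loc] a; rewrite in_setC1 => aC; rewrite inE /=.
have -> : c (a, None) != cC.
  by apply: proper; rewrite star_corona_edge /= (negbTE aC) ?eqxx.
have -> : c (a, Some tt) != c (a, None) by apply: proper; rewrite star_corona_edge /= eqxx.
apply/eqP => pair_a.
suff : (a, None) = (center, Some tt) :> V by [].
apply/loc/(color_code_eq_of_maps (phi := fold_onto_pendant a) (psi := swap_leaf_pendant a)).
- exact: fold_onto_pendant_color.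
- by move=> v; rewrite !gdist_star_corona corona_dist_fold_onto_pendant.
- by apply: swap_leaf_pendant_color; case: pair_a.
- by move=> v; rewrite !gdist_star_corona corona_dist_swap_leaf_pendant.
Qed.

Section Sufficiency.

Hypothesis center_colors : cP != cC.
Hypothesis leaf_pair_inj : {in [set~ center] &, injective leaf_pair}.
Hypothesis leaf_pair_admissible :
  {in [set~ center], forall a, leaf_pair a \in admissible_pairs cC cP}.

Lemma leaf_colors (a : 'I_n) : a != center ->
  [/\ c (a, None) != cC, c (a, Some tt) != c (a, None) & leaf_pair a != (cP, cC)].
Proof.
by move=> aC; have := @leaf_pair_admissible a; rewrite in_setC1 inE => /(_ aC)/and3P.
Qed.

Lemma proper_of_leaf_pairs : proper_coloring e c.
Proof.
move=> u v; case/vertexP: u => [||a aC|a aC]; case/vertexP: v => [||b bC|b bC];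
  rewrite star_corona_edge /= ?(@eqE (option unit)) /= ?eqxx ?andbF ?(eq_sym center);
  rewrite ?(negbTE aC) ?(negbTE bC) //; try by case: eqP.
- by rewrite eq_sym.
- by rewrite eq_sym; case/leaf_colors: bC.
- by case/leaf_colors: aC.
- by case: eqP => [<- _ | //]; rewrite eq_sym; case/leaf_colors: aC.
- by case: eqP => [<- _ | //]; case/leaf_colors: aC.
Qed.

Definition vertex_rank (u : V) : nat := (u.1 != center).*2 + (u.2 != None).

Lemma vertex_of_nbhd_colors (u v : V) : vertex_rank u <= vertex_rank v ->
  c u = c v -> nbhd_colors u = nbhd_colors v -> u = v.
Proof.
case/vertexP: u => [||a aC|a aC]; case/vertexP: v => [||b bC|b bC];
  rewrite /vertex_rank /= ?aC ?bC ?eqxx //= => _ own /setP N.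
- by move: center_colors; rewrite own eqxx.
- by case/leaf_colors: bC; rewrite own eqxx.
- have : cP \in nbhd_colors (b, Some tt) by rewrite -N center_pendant_color_in_nbhd.
  rewrite nbhd_colors_leaf_pendant // !inE -own (negbTE center_colors) /= => /eqP cb.
  by case/leaf_colors: bC => _ _; rewrite /leaf_pair -cb -own eqxx.
- have : c (b, Some tt) \in nbhd_colors (center, Some tt).
    by rewrite N nbhd_colors_leaf // !inE eqxx !orbT.
  rewrite nbhd_colors_center_pendant !inE.
  case/leaf_colors: bC => _; rewrite /leaf_pair -own => b2 b3.
  by rewrite (negbTE b2) /= => /eqP bc; move: b3; rewrite bc eqxx.
- have : c (b, None) \in nbhd_colors (center, Some tt).
    by rewrite N nbhd_colors_leaf_pendant // !inE eqxx !orbT.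
  rewrite nbhd_colors_center_pendant !inE own.
  by case/leaf_colors: bC => b1 b2 _; rewrite eq_sym (negbTE b2) (negbTE b1).
- have [_ a2 _] := leaf_colors aC; have [_ b2 _] := leaf_colors bC.
  suff -> : a = b by [].
  apply: leaf_pair_inj; rewrite ?in_setC1 // /leaf_pair own; congr pair.
  have : c (a, Some tt) \in nbhd_colors (b, None).
    by rewrite -N nbhd_colors_leaf // !inE eqxx !orbT.
  rewrite nbhd_colors_leaf // !inE -own (negbTE a2) /=.
  case/orP => [/eqP // | /eqP ac].
  have : c (b, Some tt) \in nbhd_colors (a, None).
    by rewrite N nbhd_colors_leaf // !inE eqxx !orbT.
  by rewrite nbhd_colors_leaf // !inE own (negbTE b2) /= ac orbb => /eqP ->.
- have [a1 _ _] := leaf_colors aC; have [b1 _ _] := leaf_colors bC.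
  have : cC \in nbhd_colors (b, Some tt) by rewrite -N nbhd_colors_leaf // !inE eqxx !orbT.
  rewrite nbhd_colors_leaf_pendant // !inE -own.
  by rewrite ![cC == _]eq_sym (negbTE a1) (negbTE b1).
- have [_ a2 _] := leaf_colors aC.
  suff -> : a = b by [].
  apply: leaf_pair_inj; rewrite ?in_setC1 // /leaf_pair own; congr pair.
  have : c (a, None) \in nbhd_colors (b, Some tt).
    by rewrite -N nbhd_colors_leaf_pendant // !inE eqxx !orbT.
  by rewrite nbhd_colors_leaf_pendant // !inE -own eq_sym (negbTE a2) /= => /eqP.
Qed.

Lemma locating_of_leaf_pairs : locating_coloring e c.
Proof.
split=> [|u v code_uv]; first exact: proper_of_leaf_pairs.
have own : c u = c v by apply/eqP; rewrite -color_code_eq0 code_uv color_code_eq0.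
have near : nbhd_colors u = nbhd_colors v.
  by apply/setP => i; rewrite -!color_code_leq1 code_uv.
have [le_uv | /ltnW le_vu] := leqP (vertex_rank u) (vertex_rank v).
  exact: vertex_of_nbhd_colors.
by apply/esym/vertex_of_nbhd_colors.
Qed.

End Sufficiency.

End Coloring.

Lemma locating_coloring_bound k (c : V -> 'I_k) :
  locating_coloring e c -> n <= k.-1 ^ 2.
Proof.
move=> loc; have cPC : c (center, Some tt) != c (center, None).
  by case: loc => proper _; apply: proper; rewrite star_corona_edge /= ?eqxx.
have sub : leaf_pair c @: [set~ center]
    \subset admissible_pairs (c (center, None)) (c (center, Some tt)).
  by apply/subsetP => _ /imsetP [a aC ->]; apply: locating_leaf_pair_admissible.
have := subset_leq_card sub; rewrite card_in_imset; last exact: locating_leaf_pair_inj.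
by rewrite cardsC1 card_ord card_admissible_pairs //; move: (k.-1 ^ 2) => m; lia.
Qed.

Lemma exists_locating_coloring k (x y : 'I_k) : y != x -> n <= k.-1 ^ 2 ->
  exists c : V -> 'I_k, locating_coloring e c.
Proof.
move=> yx; set B := admissible_pairs x y => nk.
pose f (a : 'I_n) := nth (x, x) (enum B) (val a).-1.
have f_idx (a : 'I_n) : a != center -> (val a).-1 < size (enum B).
  rewrite -cardE card_admissible_pairs // eq_center; have := valP a.
  by move: (k.-1 ^ 2) nk => m; lia.
pose c (v : V) := if v.1 == center then (if v.2 is Some _ then y else x)
                  else (if v.2 is Some _ then (f v.1).2 else (f v.1).1).
have pair_c (a : 'I_n) : a != center -> leaf_pair c a = f a.
  by rewrite /leaf_pair /c /= => /negbTE ->; case: (f a).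
exists c; apply: locating_of_leaf_pairs.
- by rewrite /c eqxx.
- move=> a b; rewrite !in_setC1 => aC bC; rewrite !pair_c // => /eqP.
  rewrite nth_uniq ?f_idx ?enum_uniq // => /eqP ab; apply: val_inj.
  by move: aC bC ab; rewrite !eq_center; lia.
- move=> a; rewrite in_setC1 => aC; rewrite pair_c // /c eqxx /= -mem_enum.
  exact: mem_nth (f_idx a aC).
Qed.

End StarCorona.

Theorem theorem8 (n s : nat) :
  4 <= n -> (s.-1) ^ 2 < n <= s ^ 2 ->
  is_locating_chromatic_number (@star_corona_K1 n) s.+1.
Proof.
move=> n4 /andP [lt_n le_n]; have n_gt2 : 2 < n by lia.
split=> [|k c loc].
  have s0 : (ord_max : 'I_s.+1) != ord0 by rewrite -val_eqE /=; case: s le_n {lt_n} => //; lia.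
  exact: (exists_locating_coloring n_gt2 s0).
have := leq_trans lt_n (locating_coloring_bound n_gt2 loc).
by rewrite ltn_exp2r //; lia.
Qed.
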